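(* Let $R=[0,1]^2$, $s\in\mathbb{N}$, $u=2^{-s}$, and let $(B_1,B_2)$ be a good box pair. If $\ell,\ell'\in\mathcal{L}$ are two lines traversing $(B_1,B_2)$, then $|\hat{\ell}-\hat{\ell'}|\le4\sqrt u$. In particular, $W=O(\sqrt u)$, where $W$ is the supremum of $|\hat{\ell_c}-\hat{\ell}|$ over all $\ell\in\mathcal{L}$ traversing $(B_1,B_2)$ and $\ell_c$ is the line through $c_1$ and $c_2$.
   Context: For $p,q\in\mathbb{R}^2$ write $p\le q$ if both coordinates satisfy $\le$. $R$ is split into $2^s\times2^s$ congruent closed squares (''boxes'') of side length $u$. A box pair is an ordered pair $(B_1,B_2)$ of boxes with centers $c_1,c_2$. Let $\mathcal{L}$ be the set of non-vertical lines in $\mathbb{R}^2$ with positive slope; each has a unit direction vector $a=(a_1,a_2)$ with positive coordinates, and its weight is $\hat{\ell}:=\min\{a_1,a_2\}$. A line $\ell\in\mathcal{L}$ traverses $(B_1,B_2)$ if it meets both boxes. A box pair is null if $c_1\not\le c_2$; close if $c_1\le c_2$ and $\|c_1-c_2\|_2<\sqrt u$; non-diagonal if $c_1\le c_2$, $\|c_1-c_2\|_2\ge\sqrt u$, and every traversing $\ell\in\mathcal{L}$ satisfies $\hat{\ell}<u^{1/5}$; good if it is neither null, close, nor non-diagonal. $O(\sqrt u)$ means bounded by an absolute constant times $\sqrt u$, uniformly over $s$ and good box pairs. *)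

From Stdlib Require Import Reals.
Open Scope R_scope.

Definition side (s : nat) : R := / (2 ^ s).

(* Boxes are indexed by (i,j), 0 <= i,j < 2^s; box (i,j) = [i u,(i+1)u] x [j u,(j+1)u]. *)
Definition box := (nat * nat)%type.

Definition valid_box (s : nat) (B : box) : Prop :=
  (fst B < 2 ^ s)%nat /\ (snd B < 2 ^ s)%nat.

Definition in_box (s : nat) (B : box) (q : R * R) : Prop :=
  INR (fst B) * side s <= fst q <= (INR (fst B) + 1) * side s /\
  INR (snd B) * side s <= snd q <= (INR (snd B) + 1) * side s.

Definition center (s : nat) (B : box) : R * R :=
  ((INR (fst B) + / 2) * side s, (INR (snd B) + / 2) * side s).

Definition le2 (p q : R * R) : Prop := fst p <= fst q /\ snd p <= snd q.

Definition dist2 (p q : R * R) : R :=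
  sqrt ((fst q - fst p) ^ 2 + (snd q - snd p) ^ 2).

Record line := mkLine { lpt : R * R ; ldir : R * R }.

(* Membership in the class L: non-vertical lines of positive slope, represented
   with their unit direction vector a = (a1,a2) having positive coordinates. *)
Definition in_L (l : line) : Prop :=
  0 < fst (ldir l) /\ 0 < snd (ldir l) /\
  fst (ldir l) ^ 2 + snd (ldir l) ^ 2 = 1.

Definition on_line (l : line) (q : R * R) : Prop :=
  exists t : R, q = (fst (lpt l) + t * fst (ldir l), snd (lpt l) + t * snd (ldir l)).

Definition weight (l : line) : R := Rmin (fst (ldir l)) (snd (ldir l)).

Definition meets (s : nat) (l : line) (B : box) : Prop :=
  exists q, on_line l q /\ in_box s B q.

Definition traverses (s : nat) (l : line) (B1 B2 : box) : Prop :=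
  in_L l /\ meets s l B1 /\ meets s l B2.

Definition null_pair (s : nat) (B1 B2 : box) : Prop :=
  ~ le2 (center s B1) (center s B2).

Definition close_pair (s : nat) (B1 B2 : box) : Prop :=
  le2 (center s B1) (center s B2) /\
  dist2 (center s B1) (center s B2) < sqrt (side s).

Definition nondiagonal_pair (s : nat) (B1 B2 : box) : Prop :=
  le2 (center s B1) (center s B2) /\
  dist2 (center s B1) (center s B2) >= sqrt (side s) /\
  forall l, traverses s l B1 B2 -> weight l < Rpower (side s) (1 / 5).

Definition good_pair (s : nat) (B1 B2 : box) : Prop :=
  valid_box s B1 /\ valid_box s B2 /\
  ~ null_pair s B1 B2 /\ ~ close_pair s B1 B2 /\ ~ nondiagonal_pair s B1 B2.

(* Weight of the line l_c through c1 and c2: min of the coordinates of the unit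
   vector (c2 - c1)/|c2 - c1| (c1 <= c2, c1 <> c2 for a good pair). *)
Definition center_weight (s : nat) (B1 B2 : box) : R :=
  let c1 := center s B1 in let c2 := center s B2 in
  let d := dist2 c1 c2 in
  Rmin ((fst c2 - fst c1) / d) ((snd c2 - snd c1) / d).

From Stdlib Require Import Reals Lra Psatz Classical.
Open Scope R_scope.

(* Let [q1], [q2] be points of a traversing line [l] in [B1], [B2], so that
   [q2 - q1 = t a] with [a] the unit direction of [l].  The center difference
   [d = c2 - c1] then differs from [t a] by at most [u] in each coordinate, so
   the cross product [a x d] is at most [sqrt 2 u] in absolute value.  Since
   [a . d >= 0], the squared distance between [a] and [d / |d|] is at most
   [2 (a x d)^2 / |d|^2 <= 4 u^2 / |d|^2], which is at most [4 u] because a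
   good pair has [|d| >= sqrt u].  The minimum of the two coordinates is
   1-Lipschitz for the sup norm, hence every traversing line has weight within
   [2 sqrt u] of the weight of [l_c], and two traversing lines have weights
   within [4 sqrt u] of each other. *)

Lemma Rabs_le_of_sqr_le (z r : R) : 0 <= r -> z ^ 2 <= r ^ 2 -> Rabs z <= r.
Proof. intros Hr Hz; unfold Rabs; destruct (Rcase_abs z); nra. Qed.

Lemma Rabs_Rmin_sub_le (x1 x2 y1 y2 r : R) :
  Rabs (x1 - y1) <= r -> Rabs (x2 - y2) <= r ->
  Rabs (Rmin x1 x2 - Rmin y1 y2) <= r.
Proof.
  unfold Rmin, Rabs.
  destruct (Rle_dec x1 x2), (Rle_dec y1 y2); repeat destruct (Rcase_abs _); lra.
Qed.

Lemma Rabs_Rmin_sub_le_of_sqr (x1 x2 y1 y2 r : R) : 0 <= r ->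
  (x1 - y1) ^ 2 + (x2 - y2) ^ 2 <= r ^ 2 ->
  Rabs (Rmin x1 x2 - Rmin y1 y2) <= r.
Proof.
  intros Hr Hsum.
  assert (0 <= (x1 - y1) ^ 2) by apply pow2_ge_0.
  assert (0 <= (x2 - y2) ^ 2) by apply pow2_ge_0.
  apply Rabs_Rmin_sub_le; apply Rabs_le_of_sqr_le; lra.
Qed.

Lemma cross_sqr_le (a1 a2 b1 b2 : R) :
  (a1 * b2 - a2 * b1) ^ 2 <= (a1 ^ 2 + a2 ^ 2) * (b1 ^ 2 + b2 ^ 2).
Proof.
  assert (0 <= (a1 * b1 + a2 * b2) ^ 2) by apply pow2_ge_0.
  nra.
Qed.

Lemma unit_sub_normalized_sqr_le (a1 a2 d1 d2 D : R) :
  a1 ^ 2 + a2 ^ 2 = 1 -> 0 < D -> D ^ 2 = d1 ^ 2 + d2 ^ 2 ->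
  0 <= a1 * d1 + a2 * d2 ->
  (a1 - d1 / D) ^ 2 + (a2 - d2 / D) ^ 2 <= 2 * (a1 * d2 - a2 * d1) ^ 2 / D ^ 2.
Proof.
  intros Ha HD Hd HP.
  set (P := a1 * d1 + a2 * d2) in *.
  (* Lagrange's identity for the unit vector [a]. *)
  assert (Hlagrange : P ^ 2 + (a1 * d2 - a2 * d1) ^ 2 = D ^ 2)
    by (unfold P; rewrite Hd; nra).
  assert (Hgap : (a1 - d1 / D) ^ 2 + (a2 - d2 / D) ^ 2 = 2 - 2 * (P / D)).
  { replace ((a1 - d1 / D) ^ 2 + (a2 - d2 / D) ^ 2)
      with (a1 ^ 2 + a2 ^ 2 - 2 * (P / D) + (d1 ^ 2 + d2 ^ 2) / D ^ 2)
      by (unfold P; field; lra).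
    rewrite Ha, <- Hd; field; lra. }
  assert (Hcross : (a1 * d2 - a2 * d1) ^ 2 / D ^ 2 = 1 - (P / D) ^ 2)
    by (replace ((a1 * d2 - a2 * d1) ^ 2) with (D ^ 2 - P ^ 2) by lra; field; lra).
  assert (HPD : 0 <= P / D <= 1).
  { assert (HPx : P = P / D * D) by (field; lra).
    assert (HPsq : P ^ 2 <= D ^ 2)
      by (pose proof (pow2_ge_0 (a1 * d2 - a2 * d1)); lra).
    assert (HPle : P <= D) by nra.
    set (x := P / D) in *.
    split; apply Rmult_le_reg_r with D; lra. }
  replace (2 * (a1 * d2 - a2 * d1) ^ 2 / D ^ 2)
    with (2 * ((a1 * d2 - a2 * d1) ^ 2 / D ^ 2)) by (field; lra).
  rewrite Hgap, Hcross; nra.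
Qed.

Lemma unit_sub_normalized_perturbed_sqr_le (a1 a2 d1 d2 D e1 e2 t u : R) :
  0 < a1 -> 0 < a2 -> a1 ^ 2 + a2 ^ 2 = 1 -> 0 <= d1 -> 0 <= d2 ->
  0 < D -> D ^ 2 = d1 ^ 2 + d2 ^ 2 -> u <= D ^ 2 ->
  Rabs e1 <= u -> Rabs e2 <= u -> d1 + e1 = t * a1 -> d2 + e2 = t * a2 ->
  (a1 - d1 / D) ^ 2 + (a2 - d2 / D) ^ 2 <= 4 * u.
Proof.
  intros Ha1 Ha2 Ha Hd1 Hd2 HD Hd HuD He1 He2 Ht1 Ht2.
  assert (Hu : 0 <= u) by (eapply Rle_trans; [apply Rabs_pos | exact He1]).
  assert (He1sq : e1 ^ 2 <= u ^ 2)
    by (rewrite <- (pow2_abs e1); apply pow_incr; split; [apply Rabs_pos | exact He1]).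
  assert (He2sq : e2 ^ 2 <= u ^ 2)
    by (rewrite <- (pow2_abs e2); apply pow_incr; split; [apply Rabs_pos | exact He2]).
  (* [d] is [t a] up to [e], and [a x a = 0]. *)
  assert (Hcross : a1 * d2 - a2 * d1 = a2 * e1 - a1 * e2).
  { replace d1 with (t * a1 - e1) by lra; replace d2 with (t * a2 - e2) by lra; ring. }
  assert (Hcross_sq : (a1 * d2 - a2 * d1) ^ 2 <= 2 * u ^ 2).
  { rewrite Hcross.
    pose proof (cross_sqr_le a2 a1 e2 e1) as Hcs.
    replace (a2 ^ 2 + a1 ^ 2) with 1 in Hcs by lra.
    lra. }
  eapply Rle_trans.
  { apply unit_sub_normalized_sqr_le; [exact Ha | exact HD | exact Hd | nra]. }
  apply Rmult_le_reg_r with (D ^ 2); [nra |].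
  replace (2 * (a1 * d2 - a2 * d1) ^ 2 / D ^ 2 * D ^ 2)
    with (2 * (a1 * d2 - a2 * d1) ^ 2) by (field; lra).
  nra.
Qed.

Lemma side_pos (s : nat) : 0 < side s.
Proof. unfold side; apply Rinv_0_lt_compat, pow_lt; lra. Qed.

Lemma in_box_center_close (s : nat) (B : box) (q : R * R) : in_box s B q ->
  Rabs (fst q - fst (center s B)) <= side s / 2 /\
  Rabs (snd q - snd (center s B)) <= side s / 2.
Proof.
  unfold in_box, center; simpl; intros [Hx Hy].
  split; apply Rabs_le; lra.
Qed.

Lemma traverses_center_chord (s : nat) (l : line) (B1 B2 : box) :
  traverses s l B1 B2 ->
  exists t e1 e2, Rabs e1 <= side s /\ Rabs e2 <= side s /\
    fst (center s B2) - fst (center s B1) + e1 = t * fst (ldir l) /\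
    snd (center s B2) - snd (center s B1) + e2 = t * snd (ldir l).
Proof.
  intros [_ [[q1 [[t1 Hq1] Hb1]] [q2 [[t2 Hq2] Hb2]]]].
  destruct (in_box_center_close _ _ _ Hb1) as [Hx1 Hy1].
  destruct (in_box_center_close _ _ _ Hb2) as [Hx2 Hy2].
  exists (t2 - t1),
    ((fst q2 - fst (center s B2)) - (fst q1 - fst (center s B1))),
    ((snd q2 - snd (center s B2)) - (snd q1 - snd (center s B1))).
  assert (Herr : forall x y, Rabs x <= side s / 2 -> Rabs y <= side s / 2 ->
                   Rabs (x - y) <= side s).
  { intros x y Hx Hy; unfold Rminus.
    eapply Rle_trans; [apply Rabs_triang |]; rewrite Rabs_Ropp; lra. }
  repeat split; try (apply Herr; assumption);
    rewrite Hq1, Hq2 in *; simpl; ring.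
Qed.

Lemma good_pair_centers (s : nat) (B1 B2 : box) : good_pair s B1 B2 ->
  le2 (center s B1) (center s B2) /\
  sqrt (side s) <= dist2 (center s B1) (center s B2).
Proof.
  intros [_ [_ [Hnot_null [Hnot_close _]]]].
  assert (Hle : le2 (center s B1) (center s B2)) by (apply NNPP; exact Hnot_null).
  split; [exact Hle |].
  apply Rnot_lt_le; intros Hlt; apply Hnot_close; split; assumption.
Qed.

Lemma dist2_sqr (p q : R * R) :
  dist2 p q ^ 2 = (fst q - fst p) ^ 2 + (snd q - snd p) ^ 2.
Proof.
  unfold dist2; rewrite <- Rsqr_pow2; apply Rsqr_sqrt.
  pose proof (pow2_ge_0 (fst q - fst p)); pose proof (pow2_ge_0 (snd q - snd p)); lra.
Qed.

Lemma center_weight_close (s : nat) (B1 B2 : box) :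
  good_pair s B1 B2 -> forall l : line, traverses s l B1 B2 ->
  Rabs (center_weight s B1 B2 - weight l) <= 2 * sqrt (side s).
Proof.
  intros Hgood l Htrav.
  destruct (good_pair_centers _ _ _ Hgood) as [[Hx Hy] Hfar].
  destruct (traverses_center_chord _ _ _ _ Htrav) as (t & e1 & e2 & He1 & He2 & Ht1 & Ht2).
  destruct Htrav as [[Ha1 [Ha2 Ha]] _].
  pose proof (side_pos s) as Hu.
  assert (Hsqrt : 0 < sqrt (side s)) by (apply sqrt_lt_R0; exact Hu).
  assert (HuD : side s <= dist2 (center s B1) (center s B2) ^ 2).
  { rewrite <- (pow2_sqrt (side s)) by lra; apply pow_incr; lra. }
  rewrite Rabs_minus_sym; unfold center_weight, weight.
  apply Rabs_Rmin_sub_le_of_sqr; [lra |].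
  replace ((2 * sqrt (side s)) ^ 2) with (4 * side s)
    by (rewrite Rpow_mult_distr, pow2_sqrt; lra).
  apply (unit_sub_normalized_perturbed_sqr_le _ _ _ _ _ e1 e2 t (side s));
    try assumption; try lra.
  apply dist2_sqr.
Qed.

Theorem lemma8 :
  (forall (s : nat) (B1 B2 : box), good_pair s B1 B2 ->
     forall l l' : line, traverses s l B1 B2 -> traverses s l' B1 B2 ->
       Rabs (weight l - weight l') <= 4 * sqrt (side s))
  /\
  (exists C : R, forall (s : nat) (B1 B2 : box), good_pair s B1 B2 ->
     forall l : line, traverses s l B1 B2 ->
       Rabs (center_weight s B1 B2 - weight l) <= C * sqrt (side s)).
Proof.
  split.
  - intros s B1 B2 Hgood l l' Htrav Htrav'.
    pose proof (center_weight_close _ _ _ Hgood _ Htrav) as Hl.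
    pose proof (center_weight_close _ _ _ Hgood _ Htrav') as Hl'.
    replace (weight l - weight l')
      with ((center_weight s B1 B2 - weight l') - (center_weight s B1 B2 - weight l))
      by ring.
    eapply Rle_trans; [apply Rabs_triang |]; rewrite Rabs_Ropp; lra.
  - exists 2; exact center_weight_close.
Qed.
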